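(* Let $N\ge1$, $E=\{0,1,\dots,N\}$, and let $Q$ be the birth–death matrix on $E$ with $q_{00}=-b_0$, $q_{01}=b_0$; $q_{n,n-1}=a_n$, $q_{nn}=-(a_n+b_n)$, $q_{n,n+1}=b_n$ for $1\le n\le N-1$; $q_{N,N-1}=a_N$, $q_{NN}=-(a_N+b_N)$; all other entries $0$; where $a_i>0$ $(1\le i\le N)$ and $b_i>0$ $(0\le i\le N)$. Let $\lambda_0=\lambda_{\min}(-Q)>0$ be the minimal eigenvalue of $-Q$. Let $f_1$ be any vector with $f_1(i)>0$ for all $i\in E$ and define successively $f_{n+1}=f_n\,I\!I(f_n)$ (componentwise product), $n\ge1$. Then $f_{n+1}=(-Q)^{-1}f_n=(-Q)^{-n}f_1$ for all $n\ge1$; moreover, for every $i\in E$, $$\lim_{n\to\infty}I\!I(f_n)(i)=\frac1{\lambda_0},$$ and consequently $\lim_{n\to\infty}\min_{i\in E}I\!I(f_n)(i)=1/\lambda_0=\lim_{n\to\infty}\max_{i\in E}I\!I(f_n)(i)$.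
   Context: Define $\mu_0=1$ and $\mu_n=\frac{b_0b_1\cdots b_{n-1}}{a_1a_2\cdots a_n}$ for $1\le n\le N$. For a positive function $f$ on $E$ define $$I\!I(f)(i)=\frac1{f_i}\sum_{j=i}^N\frac1{\mu_jb_j}\sum_{k=0}^j\mu_kf_k,\qquad i\in E.$$ *)

From Stdlib Require Import Reals.
Open Scope R_scope.

(* Vectors on E = {0,...,N} are functions nat -> R (only indices <= N matter). *)

Definition qent (N : nat) (a b : nat -> R) (i j : nat) : R :=
  if Nat.eqb i 0 then
    (if Nat.eqb j 0 then - b 0%nat else if Nat.eqb j 1 then b 0%nat else 0)
  else if Nat.ltb i N then
    (if Nat.eqb j (i - 1) then a i
     else if Nat.eqb j i then - (a i + b i)
     else if Nat.eqb j (S i) then b i else 0)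
  else if Nat.eqb i N then
    (if Nat.eqb j (N - 1) then a N
     else if Nat.eqb j N then - (a N + b N) else 0)
  else 0.

Definition negQ (N : nat) (a b : nat -> R) (v : nat -> R) (i : nat) : R :=
  sum_f_R0 (fun j => - qent N a b i j * v j) N.

Fixpoint negQpow (N : nat) (a b : nat -> R) (n : nat) (v : nat -> R) : nat -> R :=
  match n with
  | O => v
  | S m => negQ N a b (negQpow N a b m v)
  end.

Definition is_eigenvalue_negQ (N : nat) (a b : nat -> R) (lam : R) : Prop :=
  exists v : nat -> R, (exists i, (i <= N)%nat /\ v i <> 0) /\
    forall i, (i <= N)%nat -> negQ N a b v i = lam * v i.

Definition is_min_eigenvalue_negQ (N : nat) (a b : nat -> R) (lam : R) : Prop :=
  is_eigenvalue_negQ N a b lam /\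
  forall mu, is_eigenvalue_negQ N a b mu -> lam <= mu.

Fixpoint prodR (g : nat -> R) (m n : nat) : R :=
  match n with
  | O => 1
  | S p => prodR g m p * g (m + p)%nat
  end.

Definition mu (a b : nat -> R) (n : nat) : R :=
  prodR b 0 n / prodR a 1 n.

Definition II (N : nat) (a b : nat -> R) (f : nat -> R) (i : nat) : R :=
  / f i * sum_f i N (fun j => / (mu a b j * b j) *
                               sum_f_R0 (fun k => mu a b k * f k) j).

Fixpoint minE (g : nat -> R) (N : nat) : R :=
  match N with
  | O => g 0%nat
  | S n => Rmin (minE g n) (g (S n))
  end.
Fixpoint maxE (g : nat -> R) (N : nat) : R :=
  match N with
  | O => g 0%nat
  | S n => Rmax (maxE g n) (g (S n))
  end.

From Stdlib Require Import Reals Lra Lia Compare_dec.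
Open Scope R_scope.

(* The inner sum in II(f)(i) is the i-th entry of T f, where T = (-Q)^{-1} is the explicit
   inverse of the birth-death generator; so the recursion reads f_{n+1} = T f_n and
   II(f_n) = T f_n / f_n.  For g >= 0, T g is squeezed between c W(g) and C W(g), where
   W(g) = sum_k mu_k g_k: T is comparable to a rank-one operator.  This forces the minimum of
   the ratio T g / g to increase and its maximum to decrease under g |-> T g, with a gap
   shrinking geometrically.  The common limit L is an eigenvalue of T with a positive
   eigenvector u, the limit of the iterates normalised by W.  Finally T is symmetric and
   positive semidefinite for the mu-weighted inner product, so every eigenvalue lam of -Q is
   positive, and pairing T|w| >= |w|/lam with u gives 1/lam <= L; hence lambda_0 = 1/L. *)

(** * Finite sums, extrema over {0, ..., N} and limits *)

Definition nonneg_on (N : nat) (g : nat -> R) : Prop := forall k, (k <= N)%nat -> 0 <= g k.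
Definition pos_on (N : nat) (g : nat -> R) : Prop := forall k, (k <= N)%nat -> 0 < g k.

Lemma sum_f_R0_lin (F G : nat -> R) p q n :
  sum_f_R0 (fun k => p * F k + q * G k) n = p * sum_f_R0 F n + q * sum_f_R0 G n.
Proof. induction n as [|n IH]; simpl; [|rewrite IH]; ring. Qed.

Lemma sum_f_R0_nonneg (F : nat -> R) n : nonneg_on n F -> 0 <= sum_f_R0 F n.
Proof.
  induction n as [|n IH]; intros HF; simpl; [apply HF; lia|].
  assert (0 <= sum_f_R0 F n) by (apply IH; intros k Hk; apply HF; lia).
  assert (0 <= F (S n)) by (apply HF; lia). lra.
Qed.

Lemma sum_f_R0_le_prefix (F : nat -> R) j n :
  nonneg_on n F -> (j <= n)%nat -> sum_f_R0 F j <= sum_f_R0 F n.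
Proof.
  induction n as [|n IH]; intros HF Hj.
  - replace j with 0%nat by lia. lra.
  - destruct (Nat.eq_dec j (S n)) as [->|Hne]; [lra|]. simpl.
    assert (sum_f_R0 F j <= sum_f_R0 F n) by (apply IH; [intros k Hk; apply HF|]; lia).
    assert (0 <= F (S n)) by (apply HF; lia). lra.
Qed.

Lemma sum_f_R0_term_le (F : nat -> R) n k :
  nonneg_on n F -> (k <= n)%nat -> F k <= sum_f_R0 F n.
Proof.
  intros HF Hk. destruct k as [|k].
  - apply (sum_f_R0_le_prefix F 0); auto; lia.
  - assert (F (S k) = sum_f_R0 F (S k) - sum_f_R0 F k) by (simpl; ring).
    assert (0 <= sum_f_R0 F k) by (apply sum_f_R0_nonneg; intros j Hj; apply HF; lia).
    pose proof (sum_f_R0_le_prefix F (S k) n HF Hk). lra.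
Qed.

Lemma sum_f_R0_single (p : nat) (x : R) n :
  sum_f_R0 (fun j => if Nat.eqb j p then x else 0) n = if Nat.leb p n then x else 0.
Proof.
  induction n as [|n IH]; cbn [sum_f_R0].
  - destruct p; simpl; lra.
  - rewrite IH. destruct (Nat.eqb_spec (S n) p), (Nat.leb_spec p n), (Nat.leb_spec p (S n));
      try lia; lra.
Qed.

Lemma sum_f_diag (F : nat -> R) n : sum_f n n F = F n.
Proof. unfold sum_f. rewrite Nat.sub_diag. reflexivity. Qed.

Lemma sum_f_step (F : nat -> R) i n : (i < n)%nat -> sum_f i n F = F i + sum_f (S i) n F.
Proof.
  intros Hi. unfold sum_f. rewrite decomp_sum by lia.
  replace (Init.Nat.pred (n - i)) with (n - S i)%nat by lia.
  f_equal. apply sum_eq. intros k _. f_equal. lia.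
Qed.

Lemma sum_f_snoc (F : nat -> R) i n : (i <= n)%nat -> sum_f i (S n) F = sum_f i n F + F (S n).
Proof.
  intros Hi. unfold sum_f. replace (S n - i)%nat with (S (n - i)) by lia.
  simpl. f_equal. f_equal. lia.
Qed.

Lemma sum_f_ext (F G : nat -> R) i n : (i <= n)%nat ->
  (forall j, (i <= j <= n)%nat -> F j = G j) -> sum_f i n F = sum_f i n G.
Proof. intros Hi H. unfold sum_f. apply sum_eq. intros k Hk. apply H. lia. Qed.

Lemma sum_f_le_sum_f_R0 (F : nat -> R) i n :
  nonneg_on n F -> (i <= n)%nat -> sum_f i n F <= sum_f_R0 F n.
Proof.
  intros HF. induction i as [|i IH]; intros Hi.
  - unfold sum_f. rewrite Nat.sub_0_r. right. apply sum_eq. intros k _. f_equal. lia.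
  - rewrite (sum_f_step F i n) in IH by lia.
    assert (0 <= F i) by (apply HF; lia). specialize (IH ltac:(lia)). lra.
Qed.

Lemma sum_f_ge_last (F : nat -> R) i n :
  nonneg_on n F -> (i <= n)%nat -> F n <= sum_f i n F.
Proof.
  intros HF Hi. unfold sum_f.
  replace (F n) with (F (n - i + i)%nat) by (f_equal; lia).
  apply (sum_f_R0_term_le (fun x => F (x + i)%nat)); [intros k Hk; apply HF|]; lia.
Qed.

Lemma sum_f_R0_sum_f_swap (G F : nat -> R) n :
  sum_f_R0 (fun i => G i * sum_f i n F) n = sum_f_R0 (fun j => F j * sum_f_R0 G j) n.
Proof.
  induction n as [|n IH].
  - simpl. rewrite sum_f_diag. ring.
  - simpl. rewrite <- IH, sum_f_diag.
    rewrite (sum_eq (fun i => G i * sum_f i (S n) F) (fun i => 1 * (G i * sum_f i n F) + F (S n) * G i))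
      by (intros i Hi; rewrite sum_f_snoc by lia; ring).
    rewrite sum_f_R0_lin. ring.
Qed.

Lemma minE_le (F : nat -> R) n k : (k <= n)%nat -> minE F n <= F k.
Proof.
  induction n as [|n IH]; intros Hk; simpl.
  - replace k with 0%nat by lia. lra.
  - destruct (Nat.eq_dec k (S n)) as [->|]; [apply Rmin_r|].
    pose proof (Rmin_l (minE F n) (F (S n))). specialize (IH ltac:(lia)). lra.
Qed.

Lemma maxE_ge (F : nat -> R) n k : (k <= n)%nat -> F k <= maxE F n.
Proof.
  induction n as [|n IH]; intros Hk; simpl.
  - replace k with 0%nat by lia. lra.
  - destruct (Nat.eq_dec k (S n)) as [->|]; [apply Rmax_r|].
    pose proof (Rmax_l (maxE F n) (F (S n))). specialize (IH ltac:(lia)). lra.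
Qed.

Lemma minE_glb (F : nat -> R) n x : (forall k, (k <= n)%nat -> x <= F k) -> x <= minE F n.
Proof.
  induction n as [|n IH]; intros H; simpl; [apply H; lia|].
  apply Rmin_glb; [apply IH; intros k Hk|]; apply H; lia.
Qed.

Lemma maxE_lub (F : nat -> R) n x : (forall k, (k <= n)%nat -> F k <= x) -> maxE F n <= x.
Proof.
  induction n as [|n IH]; intros H; simpl; [apply H; lia|].
  apply Rmax_lub; [apply IH; intros k Hk|]; apply H; lia.
Qed.

Lemma minE_pos (F : nat -> R) n : pos_on n F -> 0 < minE F n.
Proof.
  induction n as [|n IH]; intros H; simpl; [apply H; lia|].
  apply Rmin_glb_lt; [apply IH; intros k Hk|]; apply H; lia.
Qed.

Lemma minE_le_maxE (F : nat -> R) n : minE F n <= maxE F n.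
Proof. pose proof (minE_le F n 0 (Nat.le_0_l n)). pose proof (maxE_ge F n 0 (Nat.le_0_l n)). lra. Qed.

Lemma minE_ext (F G : nat -> R) n : (forall k, (k <= n)%nat -> F k = G k) -> minE F n = minE G n.
Proof.
  induction n as [|n IH]; intros H; simpl; [apply H; lia|].
  rewrite IH by (intros k Hk; apply H; lia). rewrite H by lia. reflexivity.
Qed.

Lemma maxE_ext (F G : nat -> R) n : (forall k, (k <= n)%nat -> F k = G k) -> maxE F n = maxE G n.
Proof.
  induction n as [|n IH]; intros H; simpl; [apply H; lia|].
  rewrite IH by (intros k Hk; apply H; lia). rewrite H by lia. reflexivity.
Qed.

Lemma Rabs_le_between (x y : R) : Rabs x <= y -> - y <= x <= y.
Proof. pose proof (Rle_abs x). pose proof (Rle_abs (- x)). rewrite Rabs_Ropp in *. lra. Qed.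

Lemma Rabs_rescale_le (x W W' r m M : R) : 0 <= x -> 0 < m -> 0 < W ->
  m * W <= W' <= M * W -> m <= r <= M -> Rabs (r * x / W' - x / W) <= x / W * ((M - m) / m).
Proof.
  intros Hx Hm HW HW' Hr.
  assert (HW'0 : 0 < W') by nra.
  assert (Hxw : 0 <= x / W) by (apply Rmult_le_pos; [|apply Rlt_le, Rinv_0_lt_compat]; lra).
  replace (r * x / W' - x / W) with (x / W * ((r * W - W') / W')) by (field; lra).
  rewrite Rabs_mult, (Rabs_pos_eq (x / W)) by exact Hxw.
  apply Rmult_le_compat_l; [exact Hxw|].
  unfold Rdiv. rewrite Rabs_mult, Rabs_inv, (Rabs_pos_eq W') by lra.
  assert (Hd : Rabs (r * W - W') <= (M - m) * W) by (apply Rabs_le; nra).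
  apply (Rmult_le_reg_r (W' * m)); [nra|].
  replace (Rabs (r * W - W') * / W' * (W' * m)) with (Rabs (r * W - W') * m) by (field; lra).
  replace ((M - m) * / m * (W' * m)) with ((M - m) * W') by (field; lra).
  nra.
Qed.

Lemma Un_cv_const (x : R) : Un_cv (fun _ => x) x.
Proof. intros e He. exists 0%nat. intros n _. unfold R_dist. rewrite Rminus_diag, Rabs_R0. lra. Qed.

Lemma Un_cv_of_abs_le (s e : nat -> R) l :
  (forall n, Rabs (s n - l) <= e n) -> Un_cv e 0 -> Un_cv s l.
Proof.
  intros H He eps Heps. destruct (He eps Heps) as [M HM]. exists M. intros n Hn.
  specialize (HM n Hn). unfold R_dist in *. rewrite Rminus_0_r in HM.
  eapply Rle_lt_trans; [apply H|]. eapply Rle_lt_trans; [apply Rle_abs|exact HM].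
Qed.

Lemma Un_cv_squeeze (lo s hi : nat -> R) l : (forall n, lo n <= s n <= hi n) ->
  Un_cv lo l -> Un_cv hi l -> Un_cv s l.
Proof.
  intros H Clo Chi e He. destruct (Clo e He) as [M1 H1], (Chi e He) as [M2 H2].
  exists (max M1 M2). intros n Hn. specialize (H1 n ltac:(lia)). specialize (H2 n ltac:(lia)).
  specialize (H n). unfold R_dist in *. apply Rabs_def2 in H1, H2. apply Rabs_def1; lra.
Qed.

Lemma Un_cv_sum (F : nat -> nat -> R) (l : nat -> R) n :
  (forall k, (k <= n)%nat -> Un_cv (fun m => F m k) (l k)) ->
  Un_cv (fun m => sum_f_R0 (F m) n) (sum_f_R0 l n).
Proof.
  induction n as [|n IH]; intros H; simpl; [apply H; lia|].
  apply CV_plus; [apply IH; intros k Hk|]; apply H; lia.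
Qed.

Lemma Un_cv_pow_0 (q : R) : 0 <= q < 1 -> Un_cv (fun n => q ^ n) 0.
Proof.
  intros Hq e He. destruct (pow_lt_1_zero q ltac:(rewrite Rabs_pos_eq; lra) e He) as [M HM].
  exists M. intros n Hn. unfold R_dist. rewrite Rminus_0_r. auto.
Qed.

(* [s k + K q^k / (1 - q)] decreases and [s k - K q^k / (1 - q)] increases. *)
Lemma Un_cv_geometric_steps (s : nat -> R) (K q : R) : 0 <= q < 1 ->
  (forall k, Rabs (s (S k) - s k) <= K * q ^ k) -> { l | Un_cv s l }.
Proof.
  intros Hq H.
  set (t k := K * q ^ k / (1 - q)).
  assert (Ht : forall k, t k - t (S k) = K * q ^ k) by (intros k; unfold t; simpl; field; lra).
  assert (Hdec : forall k, s (S k) + t (S k) <= s k + t k).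
  { intros k. specialize (H k). specialize (Ht k). apply Rabs_le_between in H. lra. }
  assert (Hinc : Un_growing (fun k => s k - t k)).
  { intros k. specialize (H k). specialize (Ht k). apply Rabs_le_between in H. lra. }
  assert (Hub : forall k, s k + t k <= s 0%nat + t 0%nat).
  { induction k as [|k IH]; [lra|]. specialize (Hdec k). lra. }
  assert (Ht_nonneg : forall k, 0 <= t k).
  { intros k. pose proof (Rabs_pos (s 1%nat - s 0%nat)). specialize (H 0%nat). simpl in H.
    unfold t. apply Rmult_le_pos; [apply Rmult_le_pos; [lra|apply pow_le; lra]|].
    apply Rlt_le, Rinv_0_lt_compat. lra. }
  destruct (growing_cv _ Hinc) as [l Hl].
  { exists (s 0%nat + t 0%nat). intros x [k ->]. specialize (Hub k). specialize (Ht_nonneg k). lra. }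
  exists (l + 0). apply (Un_cv_ext (fun k => (s k - t k) + t k)); [intros; ring|].
  apply CV_plus; auto.
  apply (Un_cv_ext (fun k => K / (1 - q) * q ^ k)); [intros k; unfold t, Rdiv; ring|].
  replace 0 with (K / (1 - q) * 0) by ring. apply CV_mult; [apply Un_cv_const|apply Un_cv_pow_0; auto].
Qed.

(** * Iterating an operator comparable to a rank-one operator *)

Definition wsum (N : nat) (w g : nat -> R) : R := sum_f_R0 (fun k => w k * g k) N.

Lemma wsum_lin N w g h p q :
  wsum N w (fun k => p * g k + q * h k) = p * wsum N w g + q * wsum N w h.
Proof. unfold wsum. rewrite <- sum_f_R0_lin. apply sum_eq. intros; ring. Qed.

Lemma wsum_scal N w g p : wsum N w (fun k => p * g k) = p * wsum N w g.
Proof. unfold wsum. rewrite scal_sum. apply sum_eq. intros; ring. Qed.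

Lemma wsum_ext N w g h : (forall k, (k <= N)%nat -> g k = h k) -> wsum N w g = wsum N w h.
Proof. intros H. unfold wsum. apply sum_eq. intros k Hk. rewrite H; auto. Qed.

Section RatioIteration.

Variables (N : nat) (w : nat -> R) (T : (nat -> R) -> nat -> R) (c C : R).

Hypothesis w_pos : pos_on N w.

Lemma wsum_nonneg g : nonneg_on N g -> 0 <= wsum N w g.
Proof.
  intros Hg. apply sum_f_R0_nonneg. intros k Hk.
  apply Rmult_le_pos; [apply Rlt_le, w_pos|apply Hg]; auto.
Qed.

Lemma wsum_term_le g k : nonneg_on N g -> (k <= N)%nat -> w k * g k <= wsum N w g.
Proof.
  intros Hg Hk. apply (sum_f_R0_term_le (fun k => w k * g k)); auto.
  intros j Hj. apply Rmult_le_pos; [apply Rlt_le, w_pos|apply Hg]; auto.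
Qed.

Lemma wsum_pos g : pos_on N g -> 0 < wsum N w g.
Proof.
  intros Hg. eapply Rlt_le_trans; [|apply (wsum_term_le g 0)]; try lia.
  - apply Rmult_lt_0_compat; [apply w_pos|apply Hg]; lia.
  - intros k Hk. apply Rlt_le, Hg; auto.
Qed.

Lemma wsum_le g h : (forall k, (k <= N)%nat -> g k <= h k) -> wsum N w g <= wsum N w h.
Proof.
  intros H. apply sum_Rle. intros k Hk.
  apply Rmult_le_compat_l; [apply Rlt_le, w_pos|apply H]; auto.
Qed.

Hypothesis T_ext : forall g h, (forall k, (k <= N)%nat -> g k = h k) ->
  forall i, (i <= N)%nat -> T g i = T h i.
Hypothesis T_lin : forall g h p q i, (i <= N)%nat ->
  T (fun k => p * g k + q * h k) i = p * T g i + q * T h i.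
Hypothesis c_pos : 0 < c.
Hypothesis T_wsum_bounds : forall g, nonneg_on N g -> forall i, (i <= N)%nat ->
  c * wsum N w g <= T g i <= C * wsum N w g.

Lemma T_nonneg g : nonneg_on N g -> nonneg_on N (T g).
Proof.
  intros Hg i Hi. destruct (T_wsum_bounds g Hg i Hi) as [Hlo _].
  pose proof (wsum_nonneg g Hg). pose proof (Rmult_le_pos c _ (Rlt_le _ _ c_pos) H). lra.
Qed.

Lemma T_pos g : pos_on N g -> pos_on N (T g).
Proof.
  intros Hg i Hi.
  destruct (T_wsum_bounds g (fun k Hk => Rlt_le _ _ (Hg k Hk)) i Hi) as [Hlo _].
  pose proof (Rmult_lt_0_compat c _ c_pos (wsum_pos g Hg)). lra.
Qed.

Lemma c_le_C : c <= C.
Proof.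
  assert (H1 : pos_on N (fun _ => 1)) by (intros k _; lra).
  destruct (T_wsum_bounds _ (fun k Hk => Rlt_le _ _ (H1 k Hk)) 0 (Nat.le_0_l N)).
  apply (Rmult_le_reg_r _ _ _ (wsum_pos _ H1)). lra.
Qed.

Lemma T_abs_le v i : (i <= N)%nat -> Rabs (T v i) <= 2 * C * wsum N w (fun k => Rabs (v k)).
Proof.
  intros Hi.
  set (av k := Rabs (v k)). set (dv k := Rabs (v k) - v k).
  assert (Hav : nonneg_on N av) by (intros k _; apply Rabs_pos).
  assert (Hdv : nonneg_on N dv) by (intros k _; unfold dv; pose proof (Rle_abs (v k)); lra).
  assert (Hv : T v i = T av i - T dv i).
  { assert (Hsplit : forall k, (k <= N)%nat -> v k = 1 * av k + (-1) * dv k)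
      by (intros k _; unfold av, dv; ring).
    rewrite (T_ext _ _ Hsplit i Hi), T_lin by auto. ring. }
  assert (Hda : wsum N w dv <= 2 * wsum N w av).
  { rewrite <- wsum_scal. apply wsum_le. intros k _. unfold dv, av.
    pose proof (Rle_abs (- v k)). rewrite Rabs_Ropp in H. lra. }
  destruct (T_wsum_bounds av Hav i Hi), (T_wsum_bounds dv Hdv i Hi).
  pose proof (wsum_nonneg av Hav). pose proof (wsum_nonneg dv Hdv). pose proof c_le_C.
  assert (0 <= c * wsum N w av) by (apply Rmult_le_pos; lra).
  assert (0 <= c * wsum N w dv) by (apply Rmult_le_pos; lra).
  assert (C * wsum N w dv <= C * (2 * wsum N w av)) by (apply Rmult_le_compat_l; lra).
  apply Rabs_le. lra.
Qed.

Lemma T_cv (v : nat -> nat -> R) (l : nat -> R) :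
  (forall k, (k <= N)%nat -> Un_cv (fun n => v n k) (l k)) ->
  forall i, (i <= N)%nat -> Un_cv (fun n => T (v n) i) (T l i).
Proof.
  intros Hv i Hi.
  set (e n := 2 * C * wsum N w (fun k => Rabs (v n k - l k))).
  assert (He : Un_cv e 0).
  { replace 0 with (2 * C * sum_f_R0 (fun k => w k * Rabs (l k - l k)) N).
    2:{ rewrite (sum_eq _ (fun _ => 0 * 0)) by (intros; rewrite Rminus_diag, Rabs_R0; ring).
        rewrite <- scal_sum. ring. }
    apply CV_mult; [apply Un_cv_const|]. apply Un_cv_sum. intros k Hk.
    apply CV_mult; [apply Un_cv_const|]. apply cv_cvabs, CV_minus; [apply Hv; auto|apply Un_cv_const]. }
  apply (Un_cv_of_abs_le _ e); [intros n|exact He].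
  replace (T (v n) i - T l i) with (T (fun k => 1 * v n k + (-1) * l k) i)
    by (rewrite T_lin by auto; ring).
  eapply Rle_trans; [apply T_abs_le; auto|].
  right. unfold e. f_equal. apply wsum_ext. intros; f_equal; ring.
Qed.

Lemma T_ge_of_wsum_ge y g delta i : nonneg_on N y -> nonneg_on N g -> 0 <= delta ->
  delta * wsum N w g <= wsum N w y -> (i <= N)%nat -> delta * (c / C) * T g i <= T y i.
Proof.
  intros Hy Hg Hd Hyg Hi.
  destruct (T_wsum_bounds y Hy i Hi) as [Hylo _], (T_wsum_bounds g Hg i Hi) as [_ Hgup].
  pose proof c_le_C.
  apply (Rle_trans _ (c * (delta * wsum N w g))).
  - replace (c * (delta * wsum N w g)) with (delta * (c / C) * (C * wsum N w g)) by (field; lra).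
    apply Rmult_le_compat_l; auto. apply Rmult_le_pos; auto. apply Rlt_le, Rdiv_lt_0_compat; lra.
  - eapply Rle_trans; [|exact Hylo]. apply Rmult_le_compat_l; lra.
Qed.

Definition ratio (g : nat -> R) (i : nat) : R := / g i * T g i.
Definition ratio_min (g : nat -> R) : R := minE (ratio g) N.
Definition ratio_max (g : nat -> R) : R := maxE (ratio g) N.

Lemma ratio_min_le_max v : ratio_min v <= ratio_max v.
Proof. apply minE_le_maxE. Qed.

Lemma T_eq_mul_ratio g i : g i <> 0 -> T g i = g i * ratio g i.
Proof. intros Hg. unfold ratio. field. auto. Qed.

Lemma ratio_min_mul_le g i : pos_on N g -> (i <= N)%nat -> ratio_min g * g i <= T g i.
Proof.
  intros Hg Hi. pose proof (Hg i Hi). rewrite (T_eq_mul_ratio g i) by lra.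
  rewrite (Rmult_comm (g i)). apply Rmult_le_compat_r; [lra|apply minE_le; auto].
Qed.

Lemma ratio_max_mul_ge g i : pos_on N g -> (i <= N)%nat -> T g i <= ratio_max g * g i.
Proof.
  intros Hg Hi. pose proof (Hg i Hi). rewrite (T_eq_mul_ratio g i) by lra.
  rewrite (Rmult_comm (g i)). apply Rmult_le_compat_r; [lra|apply maxE_ge; auto].
Qed.

Lemma le_ratio_min g s : pos_on N g -> (forall i, (i <= N)%nat -> s * g i <= T g i) ->
  s <= ratio_min g.
Proof.
  intros Hg H. apply minE_glb. intros i Hi. pose proof (Hg i Hi). specialize (H i Hi).
  apply (Rmult_le_reg_r (g i)); auto. rewrite (Rmult_comm (ratio g i)), <- T_eq_mul_ratio; lra.
Qed.

Lemma ratio_max_le g s : pos_on N g -> (forall i, (i <= N)%nat -> T g i <= s * g i) ->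
  ratio_max g <= s.
Proof.
  intros Hg H. apply maxE_lub. intros i Hi. pose proof (Hg i Hi). specialize (H i Hi).
  apply (Rmult_le_reg_r (g i)); auto. rewrite (Rmult_comm (ratio g i)), <- T_eq_mul_ratio; lra.
Qed.

(* [T g - m g] and [M g - T g] are nonnegative and add up to [(M - m) g]; whichever carries
   half of the weight of [(M - m) g] pushes the ratio of [T g] away from [m] resp. [M]. *)
Lemma ratio_gap_contraction g : pos_on N g ->
  ratio_min g <= ratio_min (T g) /\ ratio_max (T g) <= ratio_max g /\
  ratio_max (T g) - ratio_min (T g) <= (1 - c / (2 * C)) * (ratio_max g - ratio_min g).
Proof.
  intros Hg.
  assert (Hg0 : nonneg_on N g) by (intros k Hk; apply Rlt_le, Hg; auto).
  pose proof (ratio_min_le_max g) as HmM.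
  pose proof (fun k => ratio_min_mul_le g k Hg) as Hgm.
  pose proof (fun k => ratio_max_mul_ge g k Hg) as HgM.
  set (m := ratio_min g) in *. set (M := ratio_max g) in *. set (h := T g) in *.
  assert (Hh : pos_on N h) by (apply T_pos; auto).
  set (y k := 1 * h k + (- m) * g k). set (z k := M * g k + (-1) * h k).
  assert (Hy : nonneg_on N y) by (intros k Hk; specialize (Hgm k Hk); unfold y; lra).
  assert (Hz : nonneg_on N z) by (intros k Hk; specialize (HgM k Hk); unfold z; lra).
  assert (Ty : forall i, (i <= N)%nat -> T y i = T h i - m * h i)
    by (intros i Hi; unfold y, h; rewrite T_lin by auto; ring).
  assert (Tz : forall i, (i <= N)%nat -> T z i = M * h i - T h i)
    by (intros i Hi; unfold z, h; rewrite T_lin by auto; ring).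
  assert (Hyz : wsum N w y + wsum N w z = (M - m) * wsum N w g)
    by (unfold y, z; rewrite !wsum_lin; ring).
  assert (Hlo : m <= ratio_min h).
  { apply le_ratio_min; auto. intros i Hi. pose proof (T_nonneg y Hy i Hi). rewrite Ty in H; auto. lra. }
  assert (Hhi : ratio_max h <= M).
  { apply ratio_max_le; auto. intros i Hi. pose proof (T_nonneg z Hz i Hi). rewrite Tz in H; auto. lra. }
  pose proof c_le_C as HcC.
  assert (Hd : 0 <= (M - m) / 2) by lra.
  replace ((1 - c / (2 * C)) * (M - m)) with ((M - m) - (M - m) / 2 * (c / C)) by (field; lra).
  destruct (Rle_or_lt ((M - m) / 2 * wsum N w g) (wsum N w y)) as [Hbig|Hsmall].
  - assert (m + (M - m) / 2 * (c / C) <= ratio_min h).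
    { apply le_ratio_min; auto. intros i Hi.
      pose proof (T_ge_of_wsum_ge y g _ i Hy Hg0 Hd Hbig Hi) as Hyi. rewrite Ty in Hyi; auto.
      change (T g i) with (h i) in Hyi. lra. }
    repeat split; lra.
  - assert (Hbig : (M - m) / 2 * wsum N w g <= wsum N w z) by lra.
    assert (ratio_max h <= M - (M - m) / 2 * (c / C)).
    { apply ratio_max_le; auto. intros i Hi.
      pose proof (T_ge_of_wsum_ge z g _ i Hz Hg0 Hd Hbig Hi) as Hzi. rewrite Tz in Hzi; auto.
      change (T g i) with (h i) in Hzi. lra. }
    repeat split; lra.
Qed.

Lemma ratio_min_pos v : pos_on N v -> 0 < ratio_min v.
Proof.
  intros Hv. apply minE_pos. intros i Hi. unfold ratio.
  apply Rmult_lt_0_compat; [apply Rinv_0_lt_compat, Hv|apply T_pos]; auto.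
Qed.

Lemma contraction_factor_range : 0 <= 1 - c / (2 * C) < 1.
Proof.
  pose proof c_le_C.
  assert (0 < c / (2 * C)) by (apply Rdiv_lt_0_compat; lra).
  assert (c / (2 * C) * (2 * C) = c) by (field; lra).
  nra.
Qed.

Definition wnormalize (v : nat -> R) (i : nat) : R := v i / wsum N w v.

Lemma wnormalize_le_inv_w v i : pos_on N v -> (i <= N)%nat -> wnormalize v i <= / w i.
Proof.
  intros Hv Hi. pose proof (wsum_pos v Hv). pose proof (w_pos i Hi).
  assert (w i * v i <= wsum N w v) by (apply wsum_term_le; auto; intros k Hk; apply Rlt_le, Hv; auto).
  unfold wnormalize. apply (Rmult_le_reg_l (w i * wsum N w v)); [nra|].
  replace (w i * wsum N w v * (v i / wsum N w v)) with (w i * v i) by (field; lra).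
  replace (w i * wsum N w v * / w i) with (wsum N w v) by (field; lra). lra.
Qed.

Variable g : nat -> nat -> R.
Hypothesis g0_pos : pos_on N (g 0%nat).
Hypothesis g_succ : forall n i, (i <= N)%nat -> g (S n) i = g n i * ratio (g n) i.

Lemma iter_succ_of_pos n : pos_on N (g n) -> forall i, (i <= N)%nat -> g (S n) i = T (g n) i.
Proof. intros Hn i Hi. rewrite g_succ, T_eq_mul_ratio by (auto; apply Rgt_not_eq, Hn; auto). ring. Qed.

Lemma iter_pos n : pos_on N (g n).
Proof.
  induction n as [|n IH]; auto.
  intros i Hi. rewrite iter_succ_of_pos by auto. apply T_pos; auto.
Qed.

Lemma iter_succ n i : (i <= N)%nat -> g (S n) i = T (g n) i.
Proof. apply iter_succ_of_pos, iter_pos. Qed.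

Lemma iter_contraction n :
  ratio_min (g n) <= ratio_min (g (S n)) /\ ratio_max (g (S n)) <= ratio_max (g n) /\
  ratio_max (g (S n)) - ratio_min (g (S n)) <=
    (1 - c / (2 * C)) * (ratio_max (g n) - ratio_min (g n)).
Proof.
  assert (E : forall i, (i <= N)%nat -> ratio (g (S n)) i = ratio (T (g n)) i).
  { intros i Hi. unfold ratio. rewrite (iter_succ n i Hi), (T_ext _ _ (iter_succ n) i Hi). reflexivity. }
  unfold ratio_min, ratio_max. rewrite (minE_ext _ _ N E), (maxE_ext _ _ N E).
  apply ratio_gap_contraction, iter_pos.
Qed.

Lemma iter_gap_le n :
  ratio_max (g n) - ratio_min (g n) <=
    (ratio_max (g 0%nat) - ratio_min (g 0%nat)) * (1 - c / (2 * C)) ^ n.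
Proof.
  induction n as [|n IH]; [simpl; lra|].
  destruct (iter_contraction n) as [_ [_ Hgap]]. pose proof contraction_factor_range.
  simpl. eapply Rle_trans; [exact Hgap|].
  replace ((ratio_max (g 0%nat) - ratio_min (g 0%nat)) * ((1 - c / (2 * C)) * (1 - c / (2 * C)) ^ n))
    with ((1 - c / (2 * C)) * ((ratio_max (g 0%nat) - ratio_min (g 0%nat)) * (1 - c / (2 * C)) ^ n))
    by ring.
  apply Rmult_le_compat_l; lra.
Qed.

Lemma iter_ratio_min_ge n : ratio_min (g 0%nat) <= ratio_min (g n).
Proof.
  induction n as [|n IH]; [lra|]. destruct (iter_contraction n) as [H _]. lra.
Qed.

Lemma iter_ratio_max_le n : ratio_max (g n) <= ratio_max (g 0%nat).
Proof.
  induction n as [|n IH]; [lra|]. destruct (iter_contraction n) as [_ [H _]]. lra.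
Qed.

Lemma iter_ratio_limit :
  { L | 0 < L /\ Un_cv (fun n => ratio_min (g n)) L /\ Un_cv (fun n => ratio_max (g n)) L }.
Proof.
  assert (Hgrow : Un_growing (fun n => ratio_min (g n))) by (intros n; apply iter_contraction).
  destruct (growing_cv _ Hgrow) as [L HL].
  { exists (ratio_max (g 0%nat)). intros x [n ->].
    pose proof (ratio_min_le_max (g n)). pose proof (iter_ratio_max_le n). lra. }
  exists L. split; [|split; auto].
  - eapply Rlt_le_trans; [apply (ratio_min_pos _ g0_pos)|]. apply (growing_ineq _ _ Hgrow HL 0).
  - apply (Un_cv_ext (fun n => ratio_min (g n) + (ratio_max (g n) - ratio_min (g n))));
      [intros; ring|].
    rewrite <- (Rplus_0_r L). apply CV_plus; auto.
    apply (Un_cv_squeeze (fun _ => 0) _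
      (fun n => (ratio_max (g 0%nat) - ratio_min (g 0%nat)) * (1 - c / (2 * C)) ^ n)).
    + intros n. split; [pose proof (ratio_min_le_max (g n)); lra|].
      apply iter_gap_le.
    + apply Un_cv_const.
    + rewrite <- (Rmult_0_r (ratio_max (g 0%nat) - ratio_min (g 0%nat))).
      apply CV_mult; [apply Un_cv_const|apply Un_cv_pow_0, contraction_factor_range].
Qed.

Lemma wnormalize_step_gap n i : (i <= N)%nat ->
  Rabs (wnormalize (g (S n)) i - wnormalize (g n) i) <=
    / w i * ((ratio_max (g n) - ratio_min (g n)) / ratio_min (g n)).
Proof.
  intros Hi. pose proof (iter_pos n) as Hn.
  set (m := ratio_min (g n)). set (M := ratio_max (g n)).
  set (W := wsum N w (g n)). set (W' := wsum N w (g (S n))).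
  assert (HW' : m * W <= W' <= M * W).
  { unfold W'. rewrite (wsum_ext _ _ _ _ (iter_succ n)). unfold W. rewrite <- !wsum_scal.
    split; apply wsum_le; intros k Hk; [apply ratio_min_mul_le|apply ratio_max_mul_ge]; auto. }
  assert (Hr : m <= ratio (g n) i <= M) by (split; [apply minE_le|apply maxE_ge]; auto).
  assert (Hm : 0 < m) by (apply ratio_min_pos; auto).
  pose proof (wsum_pos _ Hn). pose proof (Hn i Hi). pose proof (ratio_min_le_max (g n)).
  unfold wnormalize at 1. fold W'. rewrite g_succ, Rmult_comm by auto.
  eapply Rle_trans; [apply (Rabs_rescale_le _ _ _ _ m M); auto; lra|].
  apply Rmult_le_compat_r; [apply Rmult_le_pos; [lra|apply Rlt_le, Rinv_0_lt_compat; lra]|].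
  apply wnormalize_le_inv_w; auto.
Qed.

Lemma wnormalize_step n i : (i <= N)%nat ->
  Rabs (wnormalize (g (S n)) i - wnormalize (g n) i) <=
    (ratio_max (g 0%nat) - ratio_min (g 0%nat)) / (w i * ratio_min (g 0%nat)) *
    (1 - c / (2 * C)) ^ n.
Proof.
  intros Hi. eapply Rle_trans; [apply wnormalize_step_gap; auto|].
  pose proof (w_pos i Hi). pose proof (ratio_min_pos _ g0_pos).
  pose proof (iter_ratio_min_ge n). pose proof (iter_gap_le n). pose proof (ratio_min_le_max (g n)).
  replace ((ratio_max (g 0%nat) - ratio_min (g 0%nat)) / (w i * ratio_min (g 0%nat)) *
      (1 - c / (2 * C)) ^ n)
    with (/ w i * ((ratio_max (g 0%nat) - ratio_min (g 0%nat)) * (1 - c / (2 * C)) ^ n /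
          ratio_min (g 0%nat))) by (field; lra).
  apply Rmult_le_compat_l; [apply Rlt_le, Rinv_0_lt_compat; lra|].
  unfold Rdiv. apply Rmult_le_compat; try lra.
  - apply Rlt_le, Rinv_0_lt_compat; lra.
  - apply Rinv_le_contravar; lra.
Qed.

Lemma wnormalize_cv i : (i <= N)%nat -> { l | Un_cv (fun n => wnormalize (g n) i) l }.
Proof.
  intros Hi. eapply (Un_cv_geometric_steps _ _ _ contraction_factor_range).
  intros n. apply wnormalize_step; auto.
Qed.

Lemma T_wnormalize v i : pos_on N v -> (i <= N)%nat ->
  T (wnormalize v) i = ratio v i * wnormalize v i.
Proof.
  intros Hv Hi. pose proof (wsum_pos v Hv). pose proof (Hv i Hi).
  assert (E : forall k, (k <= N)%nat -> wnormalize v k = / wsum N w v * v k + 0 * v k)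
    by (intros k _; unfold wnormalize; field; lra).
  rewrite (T_ext _ _ E i Hi), T_lin, T_eq_mul_ratio by (auto; lra).
  unfold wnormalize. field. lra.
Qed.

Lemma iter_ratio_cv L i :
  Un_cv (fun n => ratio_min (g n)) L -> Un_cv (fun n => ratio_max (g n)) L -> (i <= N)%nat ->
  Un_cv (fun n => ratio (g n) i) L.
Proof.
  intros Hmin Hmax Hi.
  exact (Un_cv_squeeze _ _ _ _ (fun n => conj (minE_le _ N i Hi) (maxE_ge _ N i Hi)) Hmin Hmax).
Qed.

Lemma iter_eigenvector L : 0 < L ->
  Un_cv (fun n => ratio_min (g n)) L -> Un_cv (fun n => ratio_max (g n)) L ->
  { u | pos_on N u /\ forall i, (i <= N)%nat -> T u i = L * u i }.
Proof.
  intros HL Hmin Hmax.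
  set (u i := match le_lt_dec i N with
              | left Hi => proj1_sig (wnormalize_cv i Hi)
              | right _ => 0 end).
  assert (Hu : forall i, (i <= N)%nat -> Un_cv (fun n => wnormalize (g n) i) (u i)).
  { intros i Hi. unfold u. destruct (le_lt_dec i N) as [Hi'|]; [apply proj2_sig|lia]. }
  assert (HTu : forall i, (i <= N)%nat -> T u i = L * u i).
  { intros i Hi. apply (UL_sequence (fun n => T (wnormalize (g n)) i)).
    - apply T_cv; auto.
    - apply (Un_cv_ext (fun n => ratio (g n) i * wnormalize (g n) i)).
      + intros n. rewrite T_wnormalize; auto. apply iter_pos.
      + apply CV_mult; [apply iter_ratio_cv|]; auto. }
  assert (Hu0 : nonneg_on N u).
  { intros i Hi. apply (@Rle_cv_lim (fun _ => 0) (fun n => wnormalize (g n) i)); auto.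
    - intros n. pose proof (iter_pos n i Hi). pose proof (wsum_pos _ (iter_pos n)).
      unfold wnormalize. apply Rmult_le_pos; [|apply Rlt_le, Rinv_0_lt_compat]; lra.
    - apply Un_cv_const. }
  assert (Hwu : wsum N w u = 1).
  { apply (UL_sequence (fun n => wsum N w (wnormalize (g n)))).
    - apply Un_cv_sum. intros k Hk. apply CV_mult; [apply Un_cv_const|auto].
    - apply (Un_cv_ext (fun _ => 1)); [|apply Un_cv_const]. intros n.
      pose proof (wsum_pos _ (iter_pos n)). unfold wnormalize, Rdiv.
      rewrite (wsum_ext _ _ _ (fun k => / wsum N w (g n) * g n k)) by (intros; ring).
      rewrite wsum_scal. field. lra. }
  exists u. split; auto. intros i Hi.
  destruct (T_wsum_bounds u Hu0 i Hi) as [Hlo _]. rewrite HTu, Hwu in Hlo by auto. nra.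
Qed.

End RatioIteration.

(** * The birth-death generator and its inverse *)

Lemma prodR_pos (F : nat -> R) m n : (forall k, (m <= k < m + n)%nat -> 0 < F k) -> 0 < prodR F m n.
Proof.
  induction n as [|n IH]; intros H; simpl; [lra|].
  apply Rmult_lt_0_compat; [apply IH; intros k Hk|]; apply H; lia.
Qed.

Section BirthDeath.

Variables (N : nat) (a b : nat -> R).

Hypothesis N_pos : (1 <= N)%nat.
Hypothesis a_pos : forall i, (1 <= i <= N)%nat -> 0 < a i.
Hypothesis b_pos : forall i, (i <= N)%nat -> 0 < b i.

Lemma mu_pos : pos_on N (mu a b).
Proof.
  intros k Hk. unfold mu, Rdiv. apply Rmult_lt_0_compat.
  - apply prodR_pos. intros j Hj. apply b_pos. lia.
  - apply Rinv_0_lt_compat, prodR_pos. intros j Hj. apply a_pos. lia.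
Qed.

Lemma mu_0 : mu a b 0 = 1.
Proof. unfold mu. simpl. field. Qed.

(* Detailed balance: [mu] is a reversible measure of the chain. *)
Lemma mu_succ k : (k < N)%nat -> mu a b (S k) * a (S k) = mu a b k * b k.
Proof.
  intros Hk. unfold mu. simpl.
  assert (0 < prodR a 1 k) by (apply prodR_pos; intros; apply a_pos; lia).
  assert (0 < a (S k)) by (apply a_pos; lia).
  field. split; lra.
Qed.

Lemma negQ_first v : negQ N a b v 0 = b 0%nat * (v 0%nat - v 1%nat).
Proof.
  unfold negQ.
  rewrite (sum_eq _ (fun j => (if Nat.eqb j 0 then b 0%nat * v 0%nat else 0) +
                              (if Nat.eqb j 1 then - b 0%nat * v 1%nat else 0)))
    by (intros [|[|j]] _; unfold qent; simpl; ring).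
  rewrite sum_plus, !sum_f_R0_single.
  rewrite (proj2 (Nat.leb_le 0 N)), (proj2 (Nat.leb_le 1 N)) by lia. ring.
Qed.

Lemma negQ_interior v i : (1 <= i < N)%nat ->
  negQ N a b v i = a i * (v i - v (i - 1)%nat) + b i * (v i - v (S i)).
Proof.
  intros Hi. unfold negQ.
  rewrite (sum_eq _ (fun j => (if Nat.eqb j (i - 1) then - a i * v (i - 1)%nat else 0) +
                              (if Nat.eqb j i then (a i + b i) * v i else 0) +
                              (if Nat.eqb j (S i) then - b i * v (S i) else 0))).
  2:{ intros j _. unfold qent.
      rewrite (proj2 (Nat.eqb_neq i 0)), (proj2 (Nat.ltb_lt i N)) by lia.
      destruct (Nat.eqb_spec j (i - 1)), (Nat.eqb_spec j i), (Nat.eqb_spec j (S i));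
        try lia; subst; ring. }
  rewrite !sum_plus, !sum_f_R0_single.
  rewrite (proj2 (Nat.leb_le (i - 1) N)), (proj2 (Nat.leb_le i N)), (proj2 (Nat.leb_le (S i) N))
    by lia. ring.
Qed.

Lemma negQ_last v : negQ N a b v N = a N * (v N - v (N - 1)%nat) + b N * v N.
Proof.
  unfold negQ.
  rewrite (sum_eq _ (fun j => (if Nat.eqb j (N - 1) then - a N * v (N - 1)%nat else 0) +
                              (if Nat.eqb j N then (a N + b N) * v N else 0))).
  2:{ intros j _. unfold qent.
      rewrite (proj2 (Nat.eqb_neq N 0)), Nat.ltb_irrefl, Nat.eqb_refl by lia.
      destruct (Nat.eqb_spec j (N - 1)), (Nat.eqb_spec j N); try lia; subst; ring. }
  rewrite !sum_plus, !sum_f_R0_single.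
  rewrite (proj2 (Nat.leb_le (N - 1) N)), (proj2 (Nat.leb_le N N)) by lia. ring.
Qed.

Lemma negQ_ext v v' i : (forall k, (k <= N)%nat -> v k = v' k) -> negQ N a b v i = negQ N a b v' i.
Proof. intros H. unfold negQ. apply sum_eq. intros k Hk. rewrite H by auto. reflexivity. Qed.

Lemma negQ_lin v v' p q i :
  negQ N a b (fun k => p * v k + q * v' k) i = p * negQ N a b v i + q * negQ N a b v' i.
Proof. unfold negQ. rewrite <- sum_f_R0_lin. apply sum_eq. intros; ring. Qed.

Lemma negQ_kernel_const v : (forall i, (i <= N)%nat -> negQ N a b v i = 0) ->
  forall i, (i <= N)%nat -> v i = v 0%nat.
Proof.
  intros Hv.
  assert (Hstep : forall j, (j < N)%nat -> v (S j) = v j).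
  { induction j as [|j IH]; intros Hj.
    - pose proof (Hv 0%nat ltac:(lia)) as E. rewrite negQ_first in E.
      pose proof (b_pos 0%nat ltac:(lia)). nra.
    - pose proof (Hv (S j) ltac:(lia)) as E. rewrite negQ_interior in E by lia.
      replace (S j - 1)%nat with j in E by lia. rewrite IH in E |- * by lia.
      pose proof (b_pos (S j) ltac:(lia)). nra. }
  induction i as [|i IH]; intros Hi; [reflexivity|]. rewrite Hstep by lia. apply IH. lia.
Qed.

Lemma negQ_inj v : (forall i, (i <= N)%nat -> negQ N a b v i = 0) ->
  forall i, (i <= N)%nat -> v i = 0.
Proof.
  intros Hv. pose proof (negQ_kernel_const v Hv) as Hc.
  assert (v 0%nat = 0).
  { pose proof (Hv N ltac:(lia)) as E. rewrite negQ_last, (Hc N), (Hc (N - 1)%nat) in E by lia.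
    pose proof (b_pos N ltac:(lia)). nra. }
  intros i Hi. rewrite Hc; auto.
Qed.

Definition negQinv_incr (g : nat -> R) (j : nat) : R :=
  / (mu a b j * b j) * sum_f_R0 (fun k => mu a b k * g k) j.

(* [II N a b g] is definitionally [ratio (negQinv N a b) g]. *)
Definition negQinv (g : nat -> R) (i : nat) : R := sum_f i N (negQinv_incr g).

Lemma negQinv_incr_balance g p : (p < N)%nat ->
  b (S p) * negQinv_incr g (S p) - a (S p) * negQinv_incr g p = g (S p).
Proof.
  intros Hp. unfold negQinv_incr. rewrite <- (mu_succ p Hp). cbn [sum_f_R0].
  pose proof (mu_pos (S p) Hp). pose proof (a_pos (S p) ltac:(lia)). pose proof (b_pos (S p) Hp).
  field. lra.
Qed.

Lemma negQ_negQinv g i : (i <= N)%nat -> negQ N a b (negQinv g) i = g i.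
Proof.
  intros Hi. unfold negQinv.
  destruct i as [|p]; [|destruct (Nat.eq_dec (S p) N) as [E|E]].
  - rewrite negQ_first, (sum_f_step _ 0 N) by lia.
    unfold negQinv_incr at 1. cbn [sum_f_R0]. rewrite mu_0.
    pose proof (b_pos 0%nat ltac:(lia)). field. lra.
  - pose proof (negQinv_incr_balance g p ltac:(lia)) as B. rewrite E in B |- *.
    rewrite negQ_last. replace (N - 1)%nat with p by lia.
    rewrite (sum_f_step _ p N), E, sum_f_diag by lia. rewrite <- B. ring.
  - rewrite negQ_interior by lia. replace (S p - 1)%nat with p by lia.
    rewrite (sum_f_step _ p N), (sum_f_step _ (S p) N) by lia.
    rewrite <- (negQinv_incr_balance g p) by lia. ring.
Qed.

Lemma negQinv_ext g h : (forall k, (k <= N)%nat -> g k = h k) ->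
  forall i, (i <= N)%nat -> negQinv g i = negQinv h i.
Proof.
  intros H i Hi. apply sum_f_ext; auto. intros j Hj. unfold negQinv_incr. f_equal.
  apply sum_eq. intros k Hk. rewrite H by lia. reflexivity.
Qed.

Lemma negQinv_lin g h p q i :
  negQinv (fun k => p * g k + q * h k) i = p * negQinv g i + q * negQinv h i.
Proof.
  unfold negQinv, sum_f. rewrite <- sum_f_R0_lin. apply sum_eq. intros j _. unfold negQinv_incr.
  rewrite (sum_eq _ (fun k => p * (mu a b k * g k) + q * (mu a b k * h k))) by (intros; ring).
  rewrite sum_f_R0_lin. ring.
Qed.

Lemma negQinv_negQ v i : (i <= N)%nat -> negQinv (negQ N a b v) i = v i.
Proof.
  intros Hi.
  enough (H : 1 * negQinv (negQ N a b v) i + (-1) * v i = 0) by lra.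
  apply (negQ_inj (fun k => 1 * negQinv (negQ N a b v) k + (-1) * v k)); auto.
  intros k Hk. rewrite negQ_lin, negQ_negQinv by auto. ring.
Qed.

Lemma negQinv_incr_nonneg g j : nonneg_on N g -> (j <= N)%nat -> 0 <= negQinv_incr g j.
Proof.
  intros Hg Hj. pose proof (mu_pos j Hj). pose proof (b_pos j Hj).
  apply Rmult_le_pos; [apply Rlt_le, Rinv_0_lt_compat; nra|].
  apply sum_f_R0_nonneg. intros k Hk. apply Rmult_le_pos; [apply Rlt_le, mu_pos|apply Hg]; lia.
Qed.

Lemma negQinv_wsum_bounds g : nonneg_on N g -> forall i, (i <= N)%nat ->
  / (mu a b N * b N) * wsum N (mu a b) g <= negQinv g i <=
  sum_f_R0 (fun j => / (mu a b j * b j)) N * wsum N (mu a b) g.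
Proof.
  intros Hg i Hi.
  assert (Hincr : nonneg_on N (negQinv_incr g)) by (intros j Hj; apply negQinv_incr_nonneg; auto).
  split.
  - apply (sum_f_ge_last (negQinv_incr g)); auto.
  - eapply Rle_trans; [apply sum_f_le_sum_f_R0; auto|].
    rewrite Rmult_comm, scal_sum. apply sum_Rle. intros j Hj.
    pose proof (mu_pos j Hj). pose proof (b_pos j Hj).
    apply Rmult_le_compat_l; [apply Rlt_le, Rinv_0_lt_compat; nra|].
    apply sum_f_R0_le_prefix; auto.
    intros k Hk. apply Rmult_le_pos; [apply Rlt_le, mu_pos|apply Hg]; lia.
Qed.

Lemma negQinv_nonneg g : nonneg_on N g -> nonneg_on N (negQinv g).
Proof.
  intros Hg i Hi. eapply Rle_trans; [|apply (negQinv_wsum_bounds g Hg i Hi)].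
  pose proof (mu_pos N (le_n N)). pose proof (b_pos N (le_n N)).
  apply Rmult_le_pos; [apply Rlt_le, Rinv_0_lt_compat; nra|].
  apply sum_f_R0_nonneg. intros k Hk. apply Rmult_le_pos; [apply Rlt_le, mu_pos|apply Hg]; lia.
Qed.

Lemma wsum_negQinv_mul g h :
  wsum N (mu a b) (fun k => negQinv g k * h k) =
  sum_f_R0 (fun j => negQinv_incr g j * sum_f_R0 (fun k => mu a b k * h k) j) N.
Proof.
  unfold wsum, negQinv.
  rewrite (sum_eq _ (fun k => (mu a b k * h k) * sum_f k N (negQinv_incr g))) by (intros; ring).
  apply sum_f_R0_sum_f_swap.
Qed.

Lemma negQinv_symmetric g h :
  wsum N (mu a b) (fun k => negQinv g k * h k) = wsum N (mu a b) (fun k => g k * negQinv h k).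
Proof.
  rewrite (wsum_ext _ _ (fun k => g k * negQinv h k) (fun k => negQinv h k * g k)) by (intros; ring).
  rewrite !wsum_negQinv_mul. apply sum_eq. intros j _. unfold negQinv_incr. ring.
Qed.

Lemma negQinv_psd g : 0 <= wsum N (mu a b) (fun k => negQinv g k * g k).
Proof.
  rewrite wsum_negQinv_mul. apply sum_f_R0_nonneg. intros j Hj. unfold negQinv_incr.
  pose proof (mu_pos j Hj). pose proof (b_pos j Hj).
  rewrite Rmult_assoc. apply Rmult_le_pos; [apply Rlt_le, Rinv_0_lt_compat; nra|apply Rle_0_sqr].
Qed.

Lemma negQ_eigen_negQinv lam v : (forall k, (k <= N)%nat -> negQ N a b v k = lam * v k) ->
  forall i, (i <= N)%nat -> lam * negQinv v i = v i.
Proof.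
  intros Hv i Hi. rewrite <- (negQinv_negQ v i Hi).
  assert (E : forall k, (k <= N)%nat -> negQ N a b v k = lam * v k + 0 * v k)
    by (intros k Hk; rewrite Hv by auto; ring).
  rewrite (negQinv_ext _ _ E i Hi), negQinv_lin. ring.
Qed.

Lemma wsum_pos_of_term h i0 : nonneg_on N h -> (i0 <= N)%nat -> 0 < h i0 -> 0 < wsum N (mu a b) h.
Proof.
  intros Hh Hi0 H0. eapply Rlt_le_trans; [|apply (wsum_term_le N _ mu_pos _ i0); auto].
  apply Rmult_lt_0_compat; [apply mu_pos|]; auto.
Qed.

(* [lam <T v, v>_mu = <v, v>_mu > 0], while [<T v, v>_mu >= 0]. *)
Lemma eigenvalue_pos lam : is_eigenvalue_negQ N a b lam -> 0 < lam.
Proof.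
  intros [v [[i0 [Hi0 Hv0]] Hv]]. pose proof (negQ_eigen_negQinv lam v Hv) as HT.
  assert (Hlam : lam <> 0).
  { intros ->. apply Hv0. rewrite <- (HT i0 Hi0). ring. }
  assert (Hvv : 0 < wsum N (mu a b) (fun k => v k * v k)).
  { apply (wsum_pos_of_term _ i0); auto; [intros k _; apply Rle_0_sqr|apply Rsqr_pos_lt; auto]. }
  assert (E : lam * wsum N (mu a b) (fun k => negQinv v k * v k) = wsum N (mu a b) (fun k => v k * v k)).
  { rewrite <- wsum_scal. apply wsum_ext. intros k Hk. rewrite <- (HT k Hk) at 2. ring. }
  pose proof (negQinv_psd v). destruct (Rtotal_order lam 0) as [Hneg|[|]]; [nra|contradiction|auto].
Qed.

(* Pair [T |v| >= |v| / lam] with the positive eigenvector [u], using the symmetry of [T]. *)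
Lemma eigenvalue_inv_le lam L u : pos_on N u -> (forall i, (i <= N)%nat -> negQinv u i = L * u i) ->
  is_eigenvalue_negQ N a b lam -> / lam <= L.
Proof.
  intros Hu HTu Heig. pose proof (eigenvalue_pos lam Heig) as Hlam.
  destruct Heig as [v [[i0 [Hi0 Hv0]] Hv]]. pose proof (negQ_eigen_negQinv lam v Hv) as HT.
  set (av k := Rabs (v k)).
  assert (Hav : nonneg_on N av) by (intros k _; apply Rabs_pos).
  assert (Hu0 : nonneg_on N u) by (intros k Hk; apply Rlt_le, Hu; auto).
  assert (Habs : forall k, (k <= N)%nat -> / lam * av k <= negQinv av k).
  { intros k Hk.
    assert (Hm : nonneg_on N (fun j => 1 * av j + (-1) * v j))
      by (intros j _; unfold av; pose proof (Rle_abs (v j)); lra).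
    assert (Hp : nonneg_on N (fun j => 1 * av j + 1 * v j))
      by (intros j _; unfold av; pose proof (Rle_abs (- v j)); rewrite Rabs_Ropp in *; lra).
    pose proof (negQinv_nonneg _ Hm k Hk). pose proof (negQinv_nonneg _ Hp k Hk).
    assert (Hvk : negQinv v k = / lam * v k) by (rewrite <- (HT k Hk); field; lra).
    rewrite !negQinv_lin, Hvk in *. change (av k) with (Rabs (v k)).
    destruct (Rcase_abs (v k)); [rewrite Rabs_left|rewrite Rabs_right]; lra. }
  assert (Hpos : 0 < wsum N (mu a b) (fun k => u k * av k)).
  { apply (wsum_pos_of_term _ i0); auto; [intros k Hk; apply Rmult_le_pos; auto|].
    apply Rmult_lt_0_compat; [apply Hu; auto|apply Rabs_pos_lt; auto]. }
  assert (Hsym := negQinv_symmetric u av).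
  rewrite (wsum_ext _ _ _ (fun k => L * (u k * av k))) in Hsym by (intros k Hk; rewrite HTu; auto; ring).
  rewrite wsum_scal in Hsym.
  assert (/ lam * wsum N (mu a b) (fun k => u k * av k) <= wsum N (mu a b) (fun k => u k * negQinv av k)).
  { rewrite <- wsum_scal. apply (wsum_le N _ mu_pos). intros k Hk.
    pose proof (Habs k Hk). pose proof (Hu k Hk). nra. }
  nra.
Qed.

Lemma negQinv_eigenvector_is_eigenvalue L u : 0 < L -> pos_on N u ->
  (forall i, (i <= N)%nat -> negQinv u i = L * u i) -> is_eigenvalue_negQ N a b (/ L).
Proof.
  intros HL Hu HTu. exists u. split.
  - exists 0%nat. split; [lia|]. apply Rgt_not_eq, Hu. lia.
  - intros i Hi. rewrite <- (negQ_negQinv u i Hi) at 1.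
    assert (E : forall k, (k <= N)%nat -> negQinv u k = L * u k + 0 * u k)
      by (intros k Hk; rewrite HTu by auto; ring).
    rewrite (negQ_ext _ _ i E), negQ_lin. field. lra.
Qed.

Lemma min_eigenvalue_inv lam0 L u : is_min_eigenvalue_negQ N a b lam0 -> 0 < L -> pos_on N u ->
  (forall i, (i <= N)%nat -> negQinv u i = L * u i) -> / lam0 = L.
Proof.
  intros [Heig Hmin] HL Hu HTu.
  pose proof (eigenvalue_pos lam0 Heig). pose proof (eigenvalue_inv_le lam0 L u Hu HTu Heig).
  pose proof (Hmin _ (negQinv_eigenvector_is_eigenvalue L u HL Hu HTu)) as Hle.
  apply Rinv_le_contravar in Hle; auto. rewrite Rinv_inv in Hle. lra.
Qed.

Lemma negQinv_lower_coef_pos : 0 < / (mu a b N * b N).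
Proof. pose proof (mu_pos N (le_n N)). pose proof (b_pos N (le_n N)). apply Rinv_0_lt_compat. nra. Qed.

Lemma II_iterate_eq_negQinv (g : nat -> nat -> R) : pos_on N (g 0%nat) ->
  (forall n i, (i <= N)%nat -> g (S n) i = g n i * II N a b (g n) i) ->
  forall n i, (i <= N)%nat -> g (S n) i = negQinv (g n) i.
Proof.
  exact (iter_succ N (mu a b) negQinv _ _ mu_pos negQinv_lower_coef_pos negQinv_wsum_bounds g).
Qed.

Lemma II_iterate_limit (g : nat -> nat -> R) : pos_on N (g 0%nat) ->
  (forall n i, (i <= N)%nat -> g (S n) i = g n i * II N a b (g n) i) ->
  exists L u, 0 < L /\ Un_cv (fun n => minE (II N a b (g n)) N) L /\
    Un_cv (fun n => maxE (II N a b (g n)) N) L /\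
    pos_on N u /\ forall i, (i <= N)%nat -> negQinv u i = L * u i.
Proof.
  intros Hg0 Hg.
  pose proof (fun g h p q i (_ : (i <= N)%nat) => negQinv_lin g h p q i) as Hlin.
  destruct (iter_ratio_limit N (mu a b) negQinv _ _ mu_pos negQinv_ext Hlin
    negQinv_lower_coef_pos negQinv_wsum_bounds g Hg0 Hg) as [L [HL [Hmin Hmax]]].
  destruct (iter_eigenvector N (mu a b) negQinv _ _ mu_pos negQinv_ext Hlin
    negQinv_lower_coef_pos negQinv_wsum_bounds g Hg0 Hg L HL Hmin Hmax) as [u [Hu HTu]].
  exists L, u. auto.
Qed.

End BirthDeath.

Lemma negQpow_succ N a b m v : negQpow N a b (S m) v = negQpow N a b m (negQ N a b v).
Proof. induction m as [|m IH]; [reflexivity|]. cbn [negQpow] in *. rewrite <- IH. reflexivity. Qed.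

Lemma negQpow_ext N a b m v v' : (forall k, (k <= N)%nat -> v k = v' k) ->
  forall i, (i <= N)%nat -> negQpow N a b m v i = negQpow N a b m v' i.
Proof. intros H. induction m as [|m IH]; intros i Hi; [apply H; auto|]. apply negQ_ext. auto. Qed.

Lemma negQpow_chain N a b (h : nat -> nat -> R) :
  (forall n i, (i <= N)%nat -> negQ N a b (h (S n)) i = h n i) ->
  forall n i, (i <= N)%nat -> negQpow N a b n (h n) i = h 0%nat i.
Proof.
  intros H. induction n as [|n IH]; intros i Hi; [reflexivity|].
  rewrite negQpow_succ, (negQpow_ext _ _ _ _ _ (h n)); auto.
Qed.

Theorem mainTheorem3 (N : nat) (a b : nat -> R) (lam0 : R)
  (f : nat -> nat -> R) :
  (1 <= N)%nat ->
  (forall i, (1 <= i <= N)%nat -> 0 < a i) ->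
  (forall i, (i <= N)%nat -> 0 < b i) ->
  is_min_eigenvalue_negQ N a b lam0 ->
  (forall i, (i <= N)%nat -> 0 < f 1%nat i) ->
  (forall n i, (1 <= n)%nat -> (i <= N)%nat ->
     f (S n) i = f n i * II N a b (f n) i) ->
  (* -Q is invertible on R^E *)
  (forall v : nat -> R, (forall i, (i <= N)%nat -> negQ N a b v i = 0) ->
     forall i, (i <= N)%nat -> v i = 0) /\
  (* f_{n+1} = (-Q)^{-1} f_n, i.e. (-Q) f_{n+1} = f_n *)
  (forall n i, (1 <= n)%nat -> (i <= N)%nat ->
     negQ N a b (f (S n)) i = f n i) /\
  (* f_{n+1} = (-Q)^{-n} f_1, i.e. (-Q)^n f_{n+1} = f_1 *)
  (forall n i, (1 <= n)%nat -> (i <= N)%nat ->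
     negQpow N a b n (f (S n)) i = f 1%nat i) /\
  (forall i, (i <= N)%nat ->
     Un_cv (fun n => II N a b (f (S n)) i) (/ lam0)) /\
  Un_cv (fun n => minE (II N a b (f (S n))) N) (/ lam0) /\
  Un_cv (fun n => maxE (II N a b (f (S n))) N) (/ lam0).
Proof.
  intros HN Ha Hb Hlam0 Hf1 Hf.
  set (g n := f (S n)).
  assert (Hg : forall n i, (i <= N)%nat -> g (S n) i = g n i * II N a b (g n) i)
    by (intros n i Hi; apply Hf; [lia|auto]).
  pose proof (II_iterate_eq_negQinv N a b HN Ha Hb g Hf1 Hg) as Hsucc.
  assert (HnegQ : forall n i, (i <= N)%nat -> negQ N a b (g (S n)) i = g n i).
  { intros n i Hi. rewrite (negQ_ext N a b _ _ i (Hsucc n)). apply negQ_negQinv; auto. }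
  destruct (II_iterate_limit N a b HN Ha Hb g Hf1 Hg) as [L [u [HL [Hmin [Hmax [Hu HTu]]]]]].
  rewrite (min_eigenvalue_inv N a b HN Ha Hb lam0 L u Hlam0 HL Hu HTu).
  split; [exact (negQ_inj N a b HN Hb)|].
  split; [intros [|n] i Hn Hi; [lia|exact (HnegQ n i Hi)]|].
  split; [intros n i _ Hi; exact (negQpow_chain N a b g HnegQ n i Hi)|].
  split; [intros i Hi; exact (iter_ratio_cv N (negQinv N a b) g L i Hmin Hmax Hi)|].
  split; assumption.
Qed.
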